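(* Let $A$ be an associative algebra, $M$ an $A$-bimodule, $H:A\otimes A\to M$ a Hochschild $2$-cocycle, and $\{ T_\alpha : M \to A \}_{\alpha \in \Omega}$ an $H$-twisted $\mathcal{O}$-operator family. Then $(M , \{ \ast_{\alpha, \beta} \}_{\alpha, \beta \in \Omega})$ is an $\Omega$-associative algebra, where $u \ast_{\alpha, \beta} v = T_\alpha (u) \cdot v + u \cdot T_\beta (v) + H (T_\alpha (u), T_\beta (v))$ for $u,v\in M$, $\alpha,\beta\in\Omega$.
   Context: $\Omega$ is a semigroup. Hochschild $2$-cocycle: bilinear $H$ with $a \cdot H (b, c) - H ( a \cdot b, c)+ H (a, b \cdot c) - H (a, b) \cdot c =0$ for all $a,b,c\in A$. $H$-twisted $\mathcal{O}$-operator family: linear maps $T_\alpha:M\to A$ with $T_\alpha (u) \cdot T_\beta (v) = T_{\alpha \beta} \big( T_\alpha (u) \cdot v + u \cdot T_\beta (v) + H (T_\alpha (u), T_\beta (v)) \big)$ for all $u,v,\alpha,\beta$. An $\Omega$-associative algebra is a vector space $B$ with bilinear maps $\{\cdot_{\alpha,\beta}\}_{\alpha,\beta\in\Omega}$ such that $(a \cdot_{\alpha , \beta} b) \cdot_{\alpha \beta, \gamma} c = a \cdot_{\alpha, \beta \gamma} (b \cdot_{\beta, \gamma} c)$ for all $a,b,c$, $\alpha,\beta,\gamma$. *)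

From HB Require Import structures.
From mathcomp Require Import all_boot all_algebra.
Set Implicit Arguments. Unset Strict Implicit. Unset Printing Implicit Defensive.
Import GRing.Theory.
Local Open Scope ring_scope.

Section Defs.
Variable R : fieldType.

Definition is_linear_map (U V : lmodType R) (f : U -> V) : Prop :=
  forall (a : R) (x y : U), f (a *: x + y) = a *: f x + f y.

Definition is_bilinear_map (U V W : lmodType R) (f : U -> V -> W) : Prop :=
  (forall v : V, is_linear_map (fun u => f u v)) /\
  (forall u : U, is_linear_map (f u)).

Definition is_assoc_algebra (A : lmodType R) (mul : A -> A -> A) : Prop :=
  is_bilinear_map mul /\ forall a b c : A, mul (mul a b) c = mul a (mul b c).

Definition is_bimodule (A : lmodType R) (mul : A -> A -> A) (M : lmodType R)
  (l : A -> M -> M) (r : M -> A -> M) : Prop :=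
  [/\ is_bilinear_map l, is_bilinear_map r,
      (forall (a b : A) (u : M), l (mul a b) u = l a (l b u)),
      (forall (a b : A) (u : M), r u (mul a b) = r (r u a) b) &
      (forall (a b : A) (u : M), l a (r u b) = r (l a u) b)].

Definition is_hochschild_2cocycle (A : lmodType R) (mul : A -> A -> A)
  (M : lmodType R) (l : A -> M -> M) (r : M -> A -> M) (H : A -> A -> M) : Prop :=
  is_bilinear_map H /\
  forall a b c : A, l a (H b c) - H (mul a b) c + H a (mul b c) - r (H a b) c = 0.

Definition is_twisted_O_operator_family (Omega : Type) (op : Omega -> Omega -> Omega)
  (A : lmodType R) (mul : A -> A -> A) (M : lmodType R)
  (l : A -> M -> M) (r : M -> A -> M) (H : A -> A -> M) (T : Omega -> M -> A) : Prop :=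
  (forall al : Omega, is_linear_map (T al)) /\
  forall (al be : Omega) (u v : M),
    mul (T al u) (T be v) = T (op al be) (l (T al u) v + r u (T be v) + H (T al u) (T be v))
  .

Definition is_Omega_assoc_algebra (Omega : Type) (op : Omega -> Omega -> Omega)
  (B : lmodType R) (m : Omega -> Omega -> B -> B -> B) : Prop :=
  (forall al be : Omega, is_bilinear_map (m al be)) /\
  forall (al be ga : Omega) (a b c : B),
    m (op al be) ga (m al be a b) c = m al (op be ga) a (m be ga b c).

End Defs.

(* Writing x = T_al u, y = T_be v, z = T_ga w, the O-operator identity turns
   T_(al be) (u * v) into x y, so both bracketings of u * v * w become
   expressions in x, y, z and u, v, w alone.  Expanding them with the bimodule
   axioms, they differ exactly by the Hochschild cocycle condition on (x, y, z). *)
From HB Require Import structures.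
From mathcomp Require Import all_boot all_algebra.
Set Implicit Arguments. Unset Strict Implicit.
Import GRing.Theory.
Local Open Scope ring_scope.

Lemma linear_mapD {R : fieldType} {U V : lmodType R} {f : U -> V} :
  is_linear_map f -> forall x y, f (x + y) = f x + f y.
Proof. by move=> hf x y; rewrite -{1}(scale1r x) hf scale1r. Qed.

Lemma addrACA3 (V : zmodType) (a1 b1 a2 b2 a3 b3 : V) :
  a1 + b1 + (a2 + b2) + (a3 + b3) = a1 + a2 + a3 + (b1 + b2 + b3).
Proof. by rewrite (addrACA a1) (addrACA (a1 + a2)). Qed.

Section TwistedProduct.
Variables (R : fieldType) (A M : lmodType R) (mul : A -> A -> A).
Variables (l : A -> M -> M) (r : M -> A -> M) (H : A -> A -> M).

Definition twisted_mul (Omega : Type) (T : Omega -> M -> A) (al be : Omega) (u v : M) : M :=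
  l (T al u) v + r u (T be v) + H (T al u) (T be v).

Lemma twisted_mul_bilinear (Omega : Type) (T : Omega -> M -> A) (al be : Omega) :
  is_bilinear_map l -> is_bilinear_map r -> is_bilinear_map H ->
  is_linear_map (T al) -> is_linear_map (T be) ->
  is_bilinear_map (twisted_mul T al be).
Proof.
move=> [lL lR] [rL rR] [HL HR] Tal Tbe; split=> [v|u] a x y /=;
  by rewrite /twisted_mul ?Tal ?Tbe ?lL ?lR ?rL ?rR ?HL ?HR !scalerDr addrACA3.
Qed.

Lemma hochschild_2cocycleE : is_hochschild_2cocycle mul l r H ->
  forall x y z, H (mul x y) z + r (H x y) z = l x (H y z) + H x (mul y z).
Proof.
move=> [_ cocycle] x y z; move/eqP: (cocycle x y z).
by rewrite subr_eq0 => /eqP <-; rewrite addrC addrAC subrK.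
Qed.

Lemma twisted_assoc_identity : is_bimodule mul l r -> is_hochschild_2cocycle mul l r H ->
  forall (x y z : A) (u v w : M),
    l (mul x y) w + r (l x v + r u y + H x y) z + H (mul x y) z =
    l x (l y w + r v z + H y z) + r u (mul y z) + H x (mul y z).
Proof.
move=> hM hH x y z u v w; have [[_ lR] [rL _] lM rM lr] := hM.
rewrite !(linear_mapD (rL z)) !(linear_mapD (lR x)) lM -lr rM.
rewrite -!addrA; do 2 congr (_ + _).
by rewrite (addrC (r (H x y) z)) (hochschild_2cocycleE hH) addrCA.
Qed.

End TwistedProduct.

Theorem proposition4p3 (R : fieldType) (Omega : Type) (op : Omega -> Omega -> Omega)
  (op_assoc : forall al be ga : Omega, op (op al be) ga = op al (op be ga))
  (A : lmodType R) (mul : A -> A -> A) (M : lmodType R)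
  (l : A -> M -> M) (r : M -> A -> M) (H : A -> A -> M) (T : Omega -> M -> A)
  (hA : is_assoc_algebra mul) (hM : is_bimodule mul l r)
  (hH : is_hochschild_2cocycle mul l r H)
  (hT : is_twisted_O_operator_family op mul l r H T) :
  is_Omega_assoc_algebra op
    (fun (al be : Omega) (u v : M) => l (T al u) v + r u (T be v) + H (T al u) (T be v)).
Proof.
change (is_Omega_assoc_algebra op (twisted_mul l r H T)).
have [lbil rbil _ _ _] := hM; have [Hbil _] := hH; have [Tlin O_operator] := hT.
split=> [al be | al be ga u v w]; first exact: twisted_mul_bilinear.
by rewrite /twisted_mul -!O_operator (twisted_assoc_identity hM hH).
Qed.
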